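(* Let $\mathcal{L}$ and $T$ be as in the context, let $X$ be an $\exists$-simple set and let $f\colon X\to\mathrm{VF}$ be $\exists$-strongly definable. Then the function \[X\setminus\{x\mid f(x)=0\}\to\mathrm{VF},\qquad x\mapsto\frac{1}{f(x)}\] is $\exists$-strongly definable.
   Context: $\mathcal{L}_{\mathrm{RV}}$ is the multisorted language with sorts $\mathrm{VF}$ (valued field) and $\mathrm{RV}_N$ ($N\ge1$), where for a valued field $K$ with valuation ring $\mathcal{O}_K$ and maximal ideal $\mathcal{M}_K$, $\mathrm{RV}_N=K^\times/(1+N\mathcal{M}_K)\cup\{0\}$; it contains the ring language on $\mathrm{VF}$, multiplication, constants $0,1$, a divisibility relation $\mid$ (comparison of valuations) and a partial-addition relation $\oplus$ on each $\mathrm{RV}_N$, the projections $\mathrm{rv}_N\colon\mathrm{VF}\to\mathrm{RV}_N$, $\mathrm{rv}_{N,M}\colon\mathrm{RV}_M\to\mathrm{RV}_N$ ($N\mid M$), and Hensel-lift relation symbols $P_{N,d}$ on $\mathrm{RV}_N\times\mathrm{RV}_{N^2}^{d+1}$. $\mathcal{L}$ is an expansion of $\mathcal{L}_{\mathrm{RV}}$ by constants and by function and relation symbols not involving $\mathrm{VF}$, and $T$ is an $\mathcal{L}$-theory containing the theory of nontrivially valued Henselian valued fields of characteristic zero. Definable sets/functions are those defined by $\mathcal{L}$-formulas in all models of $T$; formulas are equivalent if equivalent modulo $T$; a definable function has domain exactly its stated domain. An $\exists$-simple formula is one of the form $(\exists\xi\in\mathrm{RV}_{n_1}\times\dots\times\mathrm{RV}_{n_r})\psi(x,\xi)$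 with $\psi$ quantifier-free; an $\exists$-simple set is one defined by such a formula. If the graph of $f$ is given by $\varphi(x,y)$, then for a formula $\psi(y,z)$, $\psi(f(x),z)$ abbreviates $\exists y(\varphi(x,y)\wedge\psi(y,z))$. For $X$ $\exists$-simple, a definable $f\colon X\to Y$ is $\exists$-strongly definable if for every $\exists$-simple formula $\psi(y,z)$ there is an $\exists$-simple formula $\chi(x,z)$ such that $\psi(f(x),z)$ is equivalent to $\chi(x,z)$. *)

From HB Require Import structures.
From mathcomp Require Import all_boot all_algebra.
Set Implicit Arguments. Unset Strict Implicit. Unset Printing Implicit Defensive.
Import GRing.Theory.
Local Open Scope ring_scope.

(* Convention: [RVs N] is the sort RV_{N+1}; so RV_1, RV_2, ... are
   RVs 0, RVs 1, ...  (the paper only has RV_N for N >= 1). *)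
Inductive sort := VFs | RVs of nat.

Definition sort_code (s : sort) : option nat :=
  match s with VFs => None | RVs n => Some n end.
Definition code_sort (o : option nat) : sort :=
  match o with None => VFs | Some n => RVs n end.
Lemma sort_codeK : cancel sort_code code_sort. Proof. by case. Qed.
HB.instance Definition _ := Equality.copy sort (can_type sort_codeK).

Definition var := (sort * nat)%type.

(* index of RV_{N^2} when RVs N is RV_{N+1} *)
Definition sqidx (N : nat) : nat := ((N.+1) ^ 2).-1.

(* An expansion of L_RV by constants, function and relation symbols not
   involving VF: every argument/result sort is an RV sort (given by its index);
   constants are 0-ary function symbols. *)
Record lang := Lang {
  fsym : Type; fdom : fsym -> seq nat; fcod : fsym -> nat;
  rsym : Type; rdom : rsym -> seq nat }.

Section Syntax.
Variable L : lang.

Inductive term : sort -> Type :=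
| Var (s : sort) (i : nat) : term s
| VZero : term VFs
| VOne : term VFs
| VAdd (a b : term VFs) : term VFs
| VOpp (a : term VFs) : term VFs
| VMul (a b : term VFs) : term VFs
| RZero (N : nat) : term (RVs N)
| ROne (N : nat) : term (RVs N)
| RMul (N : nat) (a b : term (RVs N)) : term (RVs N)
| Rv (N : nat) (t : term VFs) : term (RVs N)
| RvNM (N M : nat) (t : term (RVs M)) (h : (N.+1 %| M.+1)%N) : term (RVs N)
| Fun (g : fsym L) (ts : terms (map RVs (fdom g))) : term (RVs (fcod g))
with terms : seq sort -> Type :=
| TNil : terms [::]
| TCons (s : sort) (ss : seq sort) (t : term s) (ts : terms ss) : terms (s :: ss).

Inductive formula : Type :=
| FTrue | FFalse
| FEq (s : sort) (a b : term s)
| FDiv (N : nat) (a b : term (RVs N))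
| FOplus (N : nat) (a b c : term (RVs N))
| FHens (N d : nat) (a : term (RVs N)) (bs : terms (nseq d.+1 (RVs (sqidx N))))
| FRel (r : rsym L) (ts : terms (map RVs (rdom r)))
| FNot (p : formula) | FAnd (p q : formula) | FOr (p q : formula)
| FEx (s : sort) (i : nat) (p : formula)
| FAll (s : sort) (i : nat) (p : formula).

Fixpoint fvt (s : sort) (t : term s) {struct t} : seq var :=
  match t with
  | Var s i => [:: (s, i)]
  | VZero | VOne | RZero _ | ROne _ => [::]
  | VAdd a b | VMul a b | RMul _ a b => fvt a ++ fvt b
  | VOpp a | Rv _ a | RvNM _ _ a _ => fvt a
  | Fun _ ts => fvts ts
  end
with fvts (ss : seq sort) (ts : terms ss) {struct ts} : seq var :=
  match ts with
  | TNil => [::]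
  | TCons _ _ t ts => fvt t ++ fvts ts
  end.

Fixpoint fv (p : formula) : seq var :=
  match p with
  | FTrue | FFalse => [::]
  | FEq _ a b | FDiv _ a b => fvt a ++ fvt b
  | FOplus _ a b c => fvt a ++ fvt b ++ fvt c
  | FHens _ _ a bs => fvt a ++ fvts bs
  | FRel _ ts => fvts ts
  | FNot p => fv p
  | FAnd p q | FOr p q => fv p ++ fv q
  | FEx s i p | FAll s i p => [seq v <- fv p | v != (s, i)]
  end.

Fixpoint qf (p : formula) : bool :=
  match p with
  | FNot p => qf p
  | FAnd p q | FOr p q => qf p && qf q
  | FEx _ _ _ | FAll _ _ _ => false
  | _ => true
  end.

Fixpoint esimple (p : formula) : bool :=
  match p with
  | FEx (RVs _) _ q => esimple q
  | _ => qf p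
  end.

End Syntax.

Definition in_max (K : fieldType) (O : pred K) (x : K) : bool :=
  O x && ((x == 0) || ~~ O x^-1).

Record hvf := HVF {
  hK : fieldType;
  hO : pred hK;
  hO1 : hO 1;
  hOD : forall x y, hO x -> hO y -> hO (x + y);
  hON : forall x, hO x -> hO (- x);
  hOM : forall x y, hO x -> hO y -> hO (x * y);
  hOval : forall x, x != 0 -> hO x \/ hO x^-1;
  hnontriv : exists x, ~~ hO x;
  hchar0 : forall n, (n.+1)%:R != 0 :> hK;
  hhensel : forall (p : {poly hK}) (a : hK),
      (forall i, hO p`_i) -> hO a -> in_max hO p.[a] -> ~~ in_max hO (p^`()).[a] ->
      exists b, [/\ hO b, p.[b] = 0 & in_max hO (b - a)]
}.

(* x and y have the same image in RV_{N+1} = K^x/(1+(N+1)M) u {0} *)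
Definition rv_eq (F : hvf) (N : nat) (x y : hK F) : Prop :=
  (x = 0 /\ y = 0) \/
  [/\ x != 0, y != 0 & in_max (@hO F) ((x / y - 1) / (N.+1)%:R)].

Fixpoint rv_eqs (F : hvf) (Ns : seq nat) (xs ys : seq (hK F)) : Prop :=
  match Ns, xs, ys with
  | [::], [::], [::] => True
  | N :: Ns', x :: xs', y :: ys' => rv_eq N x y /\ rv_eqs Ns' xs' ys'
  | _, _, _ => False
  end.

(* Every sort is represented by the field K: VF literally, and RV_{N+1} by
   representatives modulo rv_eq N (the class of 0 being {0}). *)
Record structure (L : lang) := Str {
  sF : hvf;
  fint : fsym L -> seq (hK sF) -> hK sF;
  rint : rsym L -> seq (hK sF) -> Prop;
  fcongr : forall g xs ys, rv_eqs (fdom g) xs ys -> rv_eq (fcod g) (fint g xs) (fint g ys);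
  rcongr : forall r xs ys, rv_eqs (rdom r) xs ys -> (rint r xs <-> rint r ys)
}.

Section Semantics.
Variables (L : lang) (M : structure L).
Local Notation K := (hK (sF M)).
Local Notation O := (@hO (sF M)).

Definition env := sort -> nat -> K.
Definition upd (e : env) (s : sort) (i : nat) (a : K) : env :=
  fun s' j => if (s', j) == (s, i) then a else e s' j.

Fixpoint eval (e : env) (s : sort) (t : term L s) {struct t} : K :=
  match t with
  | Var s i => e s i
  | VZero => 0 | VOne => 1
  | VAdd a b => eval e a + eval e b
  | VOpp a => - eval e a
  | VMul a b => eval e a * eval e b
  | RZero _ => 0 | ROne _ => 1
  | RMul _ a b => eval e a * eval e b
  | Rv _ a => eval e a
  | RvNM _ _ a _ => eval e a
  | Fun g ts => fint g (evals e ts)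
  end
with evals (e : env) (ss : seq sort) (ts : terms L ss) {struct ts} : seq K :=
  match ts with
  | TNil => [::]
  | TCons _ _ t ts => eval e t :: evals e ts
  end.

Definition sort_eq (s : sort) (x y : K) : Prop :=
  match s with VFs => x = y | RVs N => rv_eq N x y end.

Fixpoint sat (e : env) (p : formula L) : Prop :=
  match p with
  | FTrue => True
  | FFalse => False
  | FEq s a b => sort_eq s (eval e a) (eval e b)
  | FDiv _ a b => exists c, O c /\ eval e b = c * eval e a
  | FOplus N a b c => exists x y,
      [/\ rv_eq N x (eval e a), rv_eq N y (eval e b) & rv_eq N (x + y) (eval e c)]
  | FHens N d a bs => exists (x : K) (cs : seq K),
      [/\ rv_eq N x (eval e a), rv_eqs (nseq d.+1 (sqidx N)) cs (evals e bs)
        & \sum_(i < d.+1) cs`_i * x ^+ i = 0]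
  | FRel r ts => rint r (evals e ts)
  | FNot p => ~ sat e p
  | FAnd p q => sat e p /\ sat e q
  | FOr p q => sat e p \/ sat e q
  | FEx s i p => exists a : K, sat (upd e s i a) p
  | FAll s i p => forall a : K, sat (upd e s i a) p
  end.

End Semantics.

Definition models (L : lang) (T : formula L -> Prop) (M : structure L) : Prop :=
  forall p, T p -> forall e : env M, sat e p.

Definition defines_fun (L : lang) (T : formula L -> Prop) (xs : seq var)
    (theta phi : formula L) (y : nat) : Prop :=
  [/\ (VFs, y) \notin xs, {subset fv theta <= xs}, {subset fv phi <= (VFs, y) :: xs} &
   forall M : structure L, models T M -> forall e : env M,
     (sat e theta <-> exists b, sat (upd e VFs y b) phi) /\
     (forall b b', sat (upd e VFs y b) phi -> sat (upd e VFs y b') phi -> b = b')].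

(* The function with graph phi (domain defined by theta) is
   exists-strongly definable: theta is exists-simple, and for every
   exists-simple psi(y', z) there is an exists-simple chi(x, z) with
   psi(f(x), z) := (exists y, phi(x,y) /\ psi(y,z)) equivalent to chi(x,z)
   modulo T. *)
Definition estrongly_def (L : lang) (T : formula L -> Prop) (xs : seq var)
    (theta phi : formula L) (y : nat) : Prop :=
  [/\ esimple theta, defines_fun T xs theta phi y &
   forall (psi : formula L) (y' : nat), esimple psi ->
     exists chi : formula L,
       [/\ esimple chi,
           {subset fv chi <= xs ++ [seq v <- fv psi | v != (VFs, y')]} &
           forall M : structure L, models T M -> forall e : env M,
             sat e chi <->
             exists b, sat (upd e VFs y b) phi /\ sat (upd e VFs y' b) psi]].

(* The domain {x | f(x) <> 0} of 1/f is psi(f(x)) for the exists-simple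
   psi(w) := w <> 0, hence exists-simple. For an exists-simple psi(y, z),
   psi(1/f(x), z) is psi*(f(x), z) for an exists-simple psi*(w, z) equivalent
   to "w <> 0 /\ psi(1/w, z)". Substituting y = 1/w turns a VF-term t into
   w^-d t'(w) with t' a term: VF-equations are cleared of denominators by
   powers of w, and rv_N(t) becomes rv_N(t') xi_N^d for a new RV_N-variable
   xi_N, existentially quantified subject to xi_N rv_N(w) = 1. All other
   symbols only see RV_N-classes, which this preserves. *)
From Pilot Require Import Defs.
From mathcomp Require Import all_boot all_algebra.
From mathcomp Require Import ring.
Set Implicit Arguments. Unset Strict Implicit. Unset Printing Implicit Defensive.
Import GRing.Theory.
Local Open Scope ring_scope.

Section MaximalIdeal.
Variable F : hvf.
Local Notation K := (hK F).
Local Notation O := (@hO F).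
Local Notation mx := (in_max (@hO F)).

Lemma hO0 : O 0.
Proof. by rewrite -(subrr (1 : K)); apply: hOD; [|apply: hON]; apply: hO1. Qed.

Lemma hON1 : O (-1).
Proof. by apply: hON; apply: hO1. Qed.

Lemma hO_nat n : O n%:R.
Proof.
elim: n => [|n IH]; first exact: hO0.
by rewrite -addn1 natrD; apply: hOD => //; apply: hO1.
Qed.

Lemma maxO x : mx x -> O x.
Proof. by case/andP. Qed.

Lemma max0 : mx 0.
Proof. by rewrite /in_max hO0 eqxx. Qed.

Lemma maxMl z x : O z -> mx x -> mx (z * x).
Proof.
move=> Oz /andP [Ox /orP [/eqP ->|nOx]]; first by rewrite mulr0 max0.
have [->|nz] := eqVneq z 0; first by rewrite mul0r max0.
have nx : x != 0 by apply: contraNneq nOx => ->; rewrite invr0 hO0.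
rewrite /in_max hOM //= mulf_eq0 (negPf nz) (negPf nx) /=.
apply: contra nOx => Ozx.
have -> : x^-1 = z * (z * x)^-1 by rewrite invfM mulrA mulfV ?mul1r.
exact: hOM.
Qed.

Lemma maxM x y : mx x -> mx y -> mx (x * y).
Proof. by move=> /maxO Ox; apply: maxMl. Qed.

Lemma max_natMl n x : mx x -> mx (n%:R * x).
Proof. exact/maxMl/hO_nat. Qed.

Lemma maxN x : mx x -> mx (- x).
Proof. by rewrite -mulN1r; apply/maxMl/hON1. Qed.

Lemma maxD x y : mx x -> mx y -> mx (x + y).
Proof.
move=> mxx mxy; have [->|nx] := eqVneq x 0; first by rewrite add0r.
have [->|ny] := eqVneq y 0; first by rewrite addr0.
have [Oxy|Oyx] := hOval (mulf_neq0 nx (invr_neq0 ny)).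
  have -> : x + y = (x / y + 1) * y by rewrite mulrDl mul1r mulfVK.
  by apply: maxMl => //; apply: hOD => //; apply: hO1.
have -> : x + y = (y / x + 1) * x by rewrite mulrDl mul1r mulfVK // addrC.
apply: maxMl => //; apply: hOD; last exact: hO1.
by rewrite invfM invrK mulrC in Oyx.
Qed.

Lemma unit_1Dmax m : mx m -> 1 + m != 0 /\ O (1 + m)^-1.
Proof.
move=> mm; have nz : 1 + m != 0.
  apply: contraTneq mm => /eqP; rewrite addrC addr_eq0 => /eqP ->.
  by rewrite /in_max oppr_eq0 oner_eq0 invrN invr1 hON1.
split=> //; have [O1m|//] := hOval nz.
apply: contraT => nOi.
have m1 : mx (1 + m) by rewrite /in_max O1m nOi orbT.
by have := maxD m1 (maxN mm); rewrite addrK /in_max invr1 hO1 oner_eq0.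
Qed.

End MaximalIdeal.

Section RVClasses.
Variables (F : hvf) (N : nat).
Local Notation K := (hK F).
Local Notation O := (@hO F).
Local Notation mx := (in_max (@hO F)).
Local Notation n1 := ((N.+1)%:R : K).

Lemma n1_neq0 : n1 != 0.
Proof. exact: hchar0. Qed.

Lemma one_plus_maxM a b : mx a -> mx b ->
  exists2 c, mx c & (1 + n1 * a) * (1 + n1 * b) = 1 + n1 * c.
Proof.
move=> ma mb; exists (a + b + n1 * (a * b)); last by ring.
by rewrite !maxD ?max_natMl ?maxM.
Qed.

Lemma one_plus_maxV a : mx a -> exists2 c, mx c & (1 + n1 * a)^-1 = 1 + n1 * c.
Proof.
move=> ma; have [nz Oi] := unit_1Dmax (max_natMl N.+1 ma).
exists (- ((1 + n1 * a)^-1 * a)); first by apply/maxN/maxMl.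
apply: (mulfI nz); rewrite mulfV // mulrDr mulr1 mulrCA mulrN mulVKf //.
by rewrite mulrN addrK.
Qed.

Lemma rv_eqP (x y : K) : rv_eq N x y <->
  (x = 0 /\ y = 0) \/ [/\ x != 0, y != 0 & exists2 a, mx a & x = y * (1 + n1 * a)].
Proof.
have n1nz := n1_neq0.
split=> [[//|[nx ny ma]]|[//|[nx ny [a ma ex]]]]; [left|right|left|right] => //.
  split=> //; exists ((x / y - 1) / n1) => //.
  by rewrite (mulrC n1) divfK // addrC subrK mulrC divfK.
by split=> //; rewrite ex mulrAC mulfV // mul1r addrC addKr (mulrC n1) mulfK.
Qed.

Lemma rv_eq_refl (x : K) : rv_eq N x x.
Proof.
apply/rv_eqP; have [->|nx] := eqVneq x 0; [by left | right].
by split=> //; exists 0; rewrite ?max0 // mulr0 addr0 mulr1.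
Qed.

Lemma rv_eq_sym (x y : K) : rv_eq N x y -> rv_eq N y x.
Proof.
case/rv_eqP=> [[-> ->]|[nx ny [a ma ex]]]; first exact: rv_eq_refl.
have [b mb eb] := one_plus_maxV ma; have [nz _] := unit_1Dmax (max_natMl N.+1 ma).
by apply/rv_eqP; right; split=> //; exists b; rewrite // ex -eb mulfK.
Qed.

Lemma rv_eq_trans (x y z : K) : rv_eq N x y -> rv_eq N y z -> rv_eq N x z.
Proof.
case/rv_eqP=> [[-> ->]|[nx ny [a ma ex]]] /rv_eqP [[y0 z0]|[ny' nz [b mb ey]]].
- by rewrite z0; apply: rv_eq_refl.
- by rewrite eqxx in ny'.
- by rewrite y0 eqxx in ny.
have [c mc ec] := one_plus_maxM mb ma.
by apply/rv_eqP; right; split=> //; exists c; rewrite // ex ey -mulrA ec.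
Qed.

Lemma rv_eq_transr (x a a' : K) : rv_eq N a' a -> (rv_eq N x a' <-> rv_eq N x a).
Proof.
by move=> ha; split=> h; [apply: rv_eq_trans h ha | apply: rv_eq_trans h (rv_eq_sym ha)].
Qed.

Lemma rv_eq_compat (a a' b b' : K) :
  rv_eq N a' a -> rv_eq N b' b -> (rv_eq N a' b' <-> rv_eq N a b).
Proof.
move=> ha hb; split=> h.
  exact: rv_eq_trans (rv_eq_sym ha) (rv_eq_trans h hb).
exact: rv_eq_trans ha (rv_eq_trans h (rv_eq_sym hb)).
Qed.

Lemma rv_eqM (x y x' y' : K) : rv_eq N x y -> rv_eq N x' y' -> rv_eq N (x * x') (y * y').
Proof.
case/rv_eqP=> [[-> ->] _|[nx ny [a ma ex]]]; first by rewrite !mul0r; apply: rv_eq_refl.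
case/rv_eqP=> [[-> ->]|[nx' ny' [b mb ex']]]; first by rewrite !mulr0; apply: rv_eq_refl.
have [c mc ec] := one_plus_maxM ma mb.
apply/rv_eqP; right; rewrite !mulf_neq0 //; split=> //.
by exists c; rewrite // ex ex' mulrACA ec.
Qed.

Lemma rv_eq_unit (x y : K) : rv_eq N x y -> exists2 u, [/\ u != 0, O u & O u^-1] & x = u * y.
Proof.
case/rv_eqP=> [[-> ->]|[_ _ [a ma ->]]].
  by exists 1; rewrite ?mulr0 // oner_eq0 invr1 hO1.
have [nz Oi] := unit_1Dmax (max_natMl N.+1 ma).
exists (1 + n1 * a); last exact: mulrC.
by split=> //; apply: hOD; [apply: hO1 | apply/maxO/max_natMl].
Qed.

Lemma rv_eq_hOdvd (a a' b b' : K) : rv_eq N a' a -> rv_eq N b' b ->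
  (exists c, O c /\ b = c * a) -> exists c, O c /\ b' = c * a'.
Proof.
move=> /rv_eq_unit [u [nu Ou Oiu] ->] /rv_eq_unit [v [nv Ov Oiv] ->] [c [Oc ->]].
exists (v * c * u^-1); split; first by rewrite !hOM.
by rewrite -!mulrA mulKf.
Qed.

End RVClasses.

Lemma rv_eq_dvdn (F : hvf) N M (x y : hK F) :
  (N.+1 %| M.+1)%N -> rv_eq M x y -> rv_eq N x y.
Proof.
move=> /dvdnP [q hq] /rv_eqP [[-> ->]|[nx ny [a ma ex]]]; first exact: rv_eq_refl.
apply/rv_eqP; right; split=> //; exists (q%:R * a); first exact: max_natMl.
by rewrite ex hq natrM mulrA (mulrC _ q%:R).
Qed.

Lemma rv_eq_expr1 (F : hvf) N (x : hK F) n : rv_eq N x 1 -> rv_eq N (x ^+ n) 1.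
Proof.
move=> h; elim: n => [|n IH]; first exact: rv_eq_refl.
by rewrite exprS -(mulr1 1); apply: rv_eqM.
Qed.

Lemma rv_eqs_sym (F : hvf) Ns (xs ys : seq (hK F)) : rv_eqs Ns xs ys -> rv_eqs Ns ys xs.
Proof.
by elim: Ns xs ys => [|N Ns IH] [|x xs] [|y ys] //= [/rv_eq_sym ? /IH].
Qed.

Lemma rv_eqs_trans (F : hvf) Ns (xs ys zs : seq (hK F)) :
  rv_eqs Ns xs ys -> rv_eqs Ns ys zs -> rv_eqs Ns xs zs.
Proof.
elim: Ns xs ys zs => [|N Ns IH] [|x xs] [|y ys] [|z zs] //= [h1 h2] [h3 h4].
by split; [apply: rv_eq_trans h1 h3 | apply: IH h2 h4].
Qed.

Lemma rv_eqs_transr (F : hvf) Ns (xs ys ys' : seq (hK F)) :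
  rv_eqs Ns ys' ys -> (rv_eqs Ns xs ys' <-> rv_eqs Ns xs ys).
Proof.
by move=> h; split=> h'; [apply: rv_eqs_trans h' h | apply: rv_eqs_trans h' (rv_eqs_sym h)].
Qed.

Scheme term_mut_ind := Induction for term Sort Prop
with terms_mut_ind := Induction for terms Sort Prop.

(* The RV_N-variable xi_N, meant to stand for rv_N(y)^-1, is (RVs N, k): one
   index k serves every N, the sorts keeping the variables apart. *)
Section Translation.
Variables (L : lang) (y k : nat).

Fixpoint ypow n : term L VFs :=
  match n with 0 => VOne L | n.+1 => VMul (Var L VFs y) (ypow n) end.

Fixpoint rpow N (a : term L (RVs N)) n : term L (RVs N) :=
  match n with 0 => ROne L N | n.+1 => RMul a (rpow a n) end.

Fixpoint ydeg s (t : term L s) : nat :=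
  match t with
  | Var s i => if (s == VFs) && (i == y) then 1%N else 0%N
  | VAdd a b | VMul a b => (ydeg a + ydeg b)%N
  | VOpp a => ydeg a
  | _ => 0%N
  end.

(* Invariant: t(1/w) = w^-(ydeg t) * (tr_term t)(w) for VF-terms, and
   rv_N(t(1/w)) = rv_N((tr_term t)(w)) * xi_N^(ydeg t). *)
Fixpoint tr_term s (t : term L s) {struct t} : term L s :=
  match t in term _ s0 return term L s0 with
  | Var s i => match s as s0 return term L s0 with
      | VFs => if i == y then VOne L else Var L VFs i
      | RVs N => Var L (RVs N) i end
  | VZero => VZero L
  | VOne => VOne L
  | VAdd a b => VAdd (VMul (ypow (ydeg b)) (tr_term a)) (VMul (ypow (ydeg a)) (tr_term b))
  | VOpp a => VOpp (tr_term a)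
  | VMul a b => VMul (tr_term a) (tr_term b)
  | RZero N => RZero L N
  | ROne N => ROne L N
  | RMul N a b => RMul (tr_term a) (tr_term b)
  | Rv N a => RMul (Rv N (tr_term a)) (rpow (Var L (RVs N) k) (ydeg a))
  | RvNM N M a h => RvNM (tr_term a) h
  | Fun g ts => Fun (tr_terms ts)
  end
with tr_terms ss (ts : terms L ss) {struct ts} : terms L ss :=
  match ts in terms _ ss0 return terms L ss0 with
  | TNil => TNil L
  | TCons s ss t ts => TCons (tr_term t) (tr_terms ts)
  end.

Fixpoint term_rvs s (t : term L s) {struct t} : seq nat :=
  match t with
  | Rv N a => N :: term_rvs a
  | VAdd a b | VMul a b | RMul _ a b => term_rvs a ++ term_rvs b
  | VOpp a | RvNM _ _ a _ => term_rvs a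
  | Fun _ ts => terms_rvs ts
  | _ => [::]
  end
with terms_rvs ss (ts : terms L ss) {struct ts} : seq nat :=
  match ts with TNil => [::] | TCons _ _ t ts => term_rvs t ++ terms_rvs ts end.

Fixpoint formula_rvs (p : formula L) : seq nat :=
  match p with
  | FEq _ a b | FDiv _ a b => term_rvs a ++ term_rvs b
  | FOplus _ a b c => term_rvs a ++ term_rvs b ++ term_rvs c
  | FHens _ _ a bs => term_rvs a ++ terms_rvs bs
  | FRel _ ts => terms_rvs ts
  | FNot p => formula_rvs p
  | FAnd p q | FOr p q => formula_rvs p ++ formula_rvs q
  | FEx _ _ p | FAll _ _ p => formula_rvs p
  | _ => [::]
  end.

Fixpoint term_bound s (t : term L s) {struct t} : nat :=
  match t with
  | Var _ i => i.+1
  | VAdd a b | VMul a b | RMul _ a b => maxn (term_bound a) (term_bound b)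
  | VOpp a | RvNM _ _ a _ | Rv _ a => term_bound a
  | Fun _ ts => terms_bound ts
  | _ => 0%N
  end
with terms_bound ss (ts : terms L ss) {struct ts} : nat :=
  match ts with TNil => 0%N | TCons _ _ t ts => maxn (term_bound t) (terms_bound ts) end.

Fixpoint formula_bound (p : formula L) : nat :=
  match p with
  | FEq _ a b | FDiv _ a b => maxn (term_bound a) (term_bound b)
  | FOplus _ a b c => maxn (term_bound a) (maxn (term_bound b) (term_bound c))
  | FHens _ _ a bs => maxn (term_bound a) (terms_bound bs)
  | FRel _ ts => terms_bound ts
  | FNot p => formula_bound p
  | FAnd p q | FOr p q => maxn (formula_bound p) (formula_bound q)
  | FEx _ i p | FAll _ i p => maxn i.+1 (formula_bound p)
  | _ => 0%N
  end.

Fixpoint tr_qf (p : formula L) : formula L :=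
  match p with
  | FEq s a b =>
      (match s as s0 return term L s0 -> term L s0 -> formula L with
       | VFs => fun a b =>
           FEq (VMul (ypow (ydeg b)) (tr_term a)) (VMul (ypow (ydeg a)) (tr_term b))
       | RVs N => fun a b => FEq (tr_term a) (tr_term b) end) a b
  | FDiv N a b => FDiv (tr_term a) (tr_term b)
  | FOplus N a b c => FOplus (tr_term a) (tr_term b) (tr_term c)
  | FHens N d a bs => FHens (tr_term a) (tr_terms bs)
  | FRel r ts => FRel (tr_terms ts)
  | FNot p => FNot (tr_qf p)
  | FAnd p q => FAnd (tr_qf p) (tr_qf q)
  | FOr p q => FOr (tr_qf p) (tr_qf q)
  | p => p
  end.

Fixpoint ex_xi (Ns : seq nat) (body : formula L) : formula L :=
  match Ns with [::] => body | N :: Ns => FEx (RVs N) k (ex_xi Ns body) end.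

Fixpoint xi_inv (Ns : seq nat) : formula L :=
  match Ns with
  | [::] => FTrue L
  | N :: Ns =>
      FAnd (FEq (RMul (Var L (RVs N) k) (Rv N (Var L VFs y))) (ROne L N)) (xi_inv Ns)
  end.

Definition tr_qf_inv (p : formula L) : formula L :=
  ex_xi (formula_rvs p)
    (FAnd (FNot (FEq (Var L VFs y) (VZero L))) (FAnd (xi_inv (formula_rvs p)) (tr_qf p))).

Fixpoint tr_esimple (p : formula L) : formula L :=
  match p with
  | FEx (RVs n) i q => FEx (RVs n) i (tr_esimple q)
  | _ => tr_qf_inv p
  end.

End Translation.

Definition sort_rv_eq (F : hvf) (s : Defs.sort) (x x' : hK F) : Prop :=
  match s with VFs => True | RVs N => rv_eq N x x' end.

Fixpoint sorts_rv_eq (F : hvf) (ss : seq Defs.sort) (xs xs' : seq (hK F)) : Prop :=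
  match ss, xs, xs' with
  | [::], [::], [::] => True
  | s :: ss, x :: xs, x' :: xs' => sort_rv_eq s x x' /\ sorts_rv_eq ss xs xs'
  | _, _, _ => False
  end.

Lemma sorts_rv_eq_map (F : hvf) Ns (xs xs' : seq (hK F)) :
  sorts_rv_eq (map RVs Ns) xs xs' -> rv_eqs Ns xs xs'.
Proof. by elim: Ns xs xs' => [|N Ns IH] [|x xs] [|x' xs'] //= [? /IH]. Qed.

Lemma rv_eq_xi_pow (F : hvf) N (w v xi : hK F) d :
  rv_eq N (xi * w) 1 -> rv_eq N (w ^+ d * v * xi ^+ d) v.
Proof.
move=> hxi; have -> : w ^+ d * v * xi ^+ d = v * (xi * w) ^+ d by rewrite exprMn; ring.
by rewrite -[X in rv_eq _ _ X]mulr1; apply/rv_eqM/rv_eq_expr1/hxi/rv_eq_refl.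
Qed.

Lemma subset_cat_split (T : eqType) (a b c : seq T) :
  {subset a ++ b <= c} -> {subset a <= c} /\ {subset b <= c}.
Proof. by move=> h; split=> x hx; apply: h; rewrite mem_cat hx ?orbT. Qed.

Section TranslationSemantics.
Variables (L : lang) (M : structure L) (y k : nat) (Ns : seq nat) (e e' : env M).
Local Notation w := (e' VFs y).
Hypothesis w_neq0 : w != 0.
Hypothesis e_y : e VFs y = w^-1.
Hypothesis e'_e : forall s j, j != k -> (s, j) != (VFs, y) -> e' s j = e s j.
Hypothesis e'_xi : forall N, N \in Ns -> rv_eq N (e' (RVs N) k * w) 1.

Lemma eval_ypow n : eval e' (ypow L y n) = w ^+ n.
Proof. by elim: n => [|n IH] //=; rewrite IH exprS. Qed.

Lemma eval_rpow N (a : term L (RVs N)) n : eval e' (rpow a n) = eval e' a ^+ n.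
Proof. by elim: n => [|n IH] //=; rewrite IH exprS. Qed.

Definition tr_term_spec s (t : term L s) : Prop :=
  (term_bound t <= k)%N -> {subset term_rvs t <= Ns} ->
  match s with
  | VFs => eval e' (tr_term y k t) = w ^+ ydeg y t * eval e t
  | RVs N => rv_eq N (eval e' (tr_term y k t)) (eval e t)
  end.

Lemma tr_termP s (t : term L s) : tr_term_spec t.
Proof.
pose P ss (ts : terms L ss) := (terms_bound ts <= k)%N -> {subset terms_rvs ts <= Ns} ->
  sorts_rv_eq ss (evals e' (tr_terms y k ts)) (evals e ts).
move: s t; apply: (@term_mut_ind L tr_term_spec P); rewrite /tr_term_spec /P /=.
- move=> [|N] i /= ik _; have {}ik : i != k by rewrite neq_ltn ik.
    case: (eqVneq i y) => [->|iy] /=; first by rewrite expr1 e_y mulfV.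
    by rewrite mul1r e'_e // xpair_eqE negb_and iy orbT.
  by rewrite e'_e //; apply: rv_eq_refl.
- by rewrite mulr0.
- by rewrite mulr1.
- move=> a IHa b IHb; rewrite geq_max => /andP [ha hb] /subset_cat_split [sa sb].
  by rewrite !eval_ypow (IHa ha sa) (IHb hb sb) exprD; ring.
- by move=> a IHa ha sa; rewrite (IHa ha sa) mulrN.
- move=> a IHa b IHb; rewrite geq_max => /andP [ha hb] /subset_cat_split [sa sb].
  by rewrite (IHa ha sa) (IHb hb sb) exprD; ring.
- by move=> N _ _; apply: rv_eq_refl.
- by move=> N _ _; apply: rv_eq_refl.
- move=> N a IHa b IHb; rewrite geq_max => /andP [ha hb] /subset_cat_split [sa sb].
  exact: rv_eqM (IHa ha sa) (IHb hb sb).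
- move=> N a IHa ha sa; rewrite eval_rpow.
  have sa' : {subset term_rvs a <= Ns} by move=> x hx; apply: sa; rewrite inE hx orbT.
  rewrite (IHa ha sa'); apply: rv_eq_xi_pow; apply: e'_xi; apply: sa; exact: mem_head.
- by move=> N M' a IHa h ha sa; apply: rv_eq_dvdn h (IHa ha sa).
- by move=> g ts IH hi si; apply/fcongr/sorts_rv_eq_map/IH.
- by [].
- move=> s ss t IHt ts IHts; rewrite geq_max => /andP [ht hts] /subset_cat_split [st sts].
  by split; [case: s t IHt {ht st} (IHt ht st) | apply: IHts].
Qed.

Lemma tr_termV (t : term L VFs) : (term_bound t <= k)%N -> {subset term_rvs t <= Ns} ->
  eval e' (tr_term y k t) = w ^+ ydeg y t * eval e t.
Proof. exact: (@tr_termP _ t). Qed.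

Lemma tr_termR N (t : term L (RVs N)) : (term_bound t <= k)%N ->
  {subset term_rvs t <= Ns} -> rv_eq N (eval e' (tr_term y k t)) (eval e t).
Proof. exact: (@tr_termP _ t). Qed.

Lemma tr_termsP ss (ts : terms L ss) : (terms_bound ts <= k)%N ->
  {subset terms_rvs ts <= Ns} -> sorts_rv_eq ss (evals e' (tr_terms y k ts)) (evals e ts).
Proof.
elim: ts => [|[|N] ss' t ts IH] //=; rewrite geq_max => /andP [ht hts] /subset_cat_split [st sts].
  by split; last exact: IH.
by split; [apply: tr_termR | apply: IH].
Qed.

Lemma tr_qfP (p : formula L) : qf p -> (formula_bound p <= k)%N ->
  {subset formula_rvs p <= Ns} -> (sat e' (tr_qf y k p) <-> sat e p).
Proof.
elim: p => //=.
- move=> [|N] a b _; rewrite geq_max => /andP [ha hb] /subset_cat_split [sa sb] /=.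
    rewrite !eval_ypow (tr_termV ha sa) (tr_termV hb sb) !mulrA -!exprD addnC.
    by split=> [|-> //]; apply/mulfI/expf_neq0.
  exact: rv_eq_compat (tr_termR ha sa) (tr_termR hb sb).
- move=> N a b _; rewrite geq_max => /andP [ha hb] /subset_cat_split [sa sb].
  have ea := tr_termR ha sa; have eb := tr_termR hb sb.
  by split; [apply: rv_eq_hOdvd (rv_eq_sym ea) (rv_eq_sym eb) | apply: rv_eq_hOdvd ea eb].
- move=> N a b c _; rewrite !geq_max => /and3P [ha hb hc].
  move=> /subset_cat_split [sa /subset_cat_split [sb sc]].
  have ea := tr_termR ha sa; have eb := tr_termR hb sb; have ec := tr_termR hc sc.
  split=> -[u [v [/(rv_eq_transr _ ea) ua /(rv_eq_transr _ eb) vb /(rv_eq_transr _ ec) uvc]]];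
    by exists u, v.
- move=> N d a bs _; rewrite geq_max => /andP [ha hbs] /subset_cat_split [sa sbs].
  have ea := tr_termR ha sa.
  have ebs : rv_eqs (nseq d.+1 (sqidx N)) (evals e' (tr_terms y k bs)) (evals e bs).
    by apply: sorts_rv_eq_map; rewrite map_nseq; apply: tr_termsP.
  by split=> -[x [cs [/(rv_eq_transr _ ea) xa /(rv_eqs_transr _ ebs) csbs hcs]]]; exists x, cs.
- by move=> r ts _ hi si; apply/rcongr/sorts_rv_eq_map/tr_termsP.
- by move=> p IH hq hi si; rewrite IH.
- move=> p IHp q IHq /andP [hp hq]; rewrite geq_max => /andP [ip iq] /subset_cat_split [sp sq].
  by rewrite IHp // IHq.
- move=> p IHp q IHq /andP [hp hq]; rewrite geq_max => /andP [ip iq] /subset_cat_split [sp sq].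
  by rewrite IHp // IHq.
Qed.

End TranslationSemantics.

Section TranslationFreeVars.
Variables (L : lang) (y k : nat).

Definition tr_fv (A : seq var) (Ns : seq nat) (v : var) : Prop :=
  [\/ v \in A, v = (VFs, y) | exists2 N, N \in Ns & v = (RVs N, k)].

Lemma tr_fv_catl A A' Ns Ns' v : tr_fv A Ns v -> tr_fv (A ++ A') (Ns ++ Ns') v.
Proof.
by case=> [h|->|[N h ->]]; [apply: Or31; rewrite mem_cat h | apply: Or32 |
  apply: Or33; exists N; rewrite // mem_cat h].
Qed.

Lemma tr_fv_catr A A' Ns Ns' v : tr_fv A' Ns' v -> tr_fv (A ++ A') (Ns ++ Ns') v.
Proof.
by case=> [h|->|[N h ->]]; [apply: Or31; rewrite mem_cat h orbT | apply: Or32 |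
  apply: Or33; exists N; rewrite // mem_cat h orbT].
Qed.

Lemma tr_fv_mem_cat (X Y : seq var) A A' Ns Ns' :
  (forall v, v \in X -> tr_fv A Ns v) -> (forall v, v \in Y -> tr_fv A' Ns' v) ->
  forall v, v \in X ++ Y -> tr_fv (A ++ A') (Ns ++ Ns') v.
Proof.
by move=> hX hY v; rewrite mem_cat => /orP [/hX|/hY]; [apply: tr_fv_catl | apply: tr_fv_catr].
Qed.

Lemma fvt_ypow n v : v \in fvt (ypow L y n) -> v = (VFs, y).
Proof. by elim: n => [|n IH] //=; rewrite inE => /orP [/eqP|/IH]. Qed.

Lemma fvt_rpow N (a : term L (RVs N)) n v : v \in fvt (rpow a n) -> v \in fvt a.
Proof. by elim: n => [|n IH] //=; rewrite mem_cat => /orP [|/IH]. Qed.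

Lemma fvt_tr_term s (t : term L s) v :
  v \in fvt (tr_term y k t) -> tr_fv (fvt t) (term_rvs t) v.
Proof.
pose P ss (ts : terms L ss) :=
  forall v, v \in fvts (tr_terms y k ts) -> tr_fv (fvts ts) (terms_rvs ts) v.
move: s t v; apply: (@term_mut_ind L (fun s t => forall v,
  v \in fvt (tr_term y k t) -> tr_fv (fvt t) (term_rvs t) v) P); rewrite /P //=.
- move=> [|N] i v /=; last by rewrite inE => /eqP ->; apply: Or31; rewrite inE.
  by case: eqP => _ //; rewrite inE => /eqP ->; apply: Or31; rewrite inE.
- move=> a IHa b IHb v; rewrite !mem_cat.
  move=> /orP [/orP [/fvt_ypow -> | /IHa h] | /orP [/fvt_ypow -> | /IHb h]];
    by [apply: Or32 | apply: tr_fv_catl | apply: tr_fv_catr].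
- by move=> a IHa b IHb; apply: tr_fv_mem_cat.
- by move=> N a IHa b IHb; apply: tr_fv_mem_cat.
- move=> N a IHa v; rewrite mem_cat => /orP [/IHa|/fvt_rpow].
    by case=> [h|->|[N' h ->]]; [apply: Or31 | apply: Or32 |
      apply: Or33; exists N'; rewrite // inE h orbT].
  by rewrite inE => /eqP ->; apply: Or33; exists N; rewrite ?mem_head.
- by move=> s ss t IHt ts IHts; apply: tr_fv_mem_cat.
Qed.

Lemma fvts_tr_terms ss (ts : terms L ss) v :
  v \in fvts (tr_terms y k ts) -> tr_fv (fvts ts) (terms_rvs ts) v.
Proof.
elim: ts v => [|s ss' t ts IH] v //=.
by apply: tr_fv_mem_cat; [apply: fvt_tr_term | apply: IH].
Qed.

Lemma fv_tr_qf (p : formula L) v : v \in fv (tr_qf y k p) -> tr_fv (fv p) (formula_rvs p) v.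
Proof.
elim: p v => //=.
- move=> [|N] a b v /=; last by move: v; apply: tr_fv_mem_cat; apply: fvt_tr_term.
  rewrite !mem_cat => /orP [/orP [/fvt_ypow -> | /fvt_tr_term h]
                          | /orP [/fvt_ypow -> | /fvt_tr_term h]];
    by [apply: Or32 | apply: tr_fv_catl | apply: tr_fv_catr].
- by move=> N a b; apply: tr_fv_mem_cat; apply: fvt_tr_term.
- move=> N a b c; apply: tr_fv_mem_cat; first exact: fvt_tr_term.
  by apply: tr_fv_mem_cat; apply: fvt_tr_term.
- by move=> N d a bs; apply: tr_fv_mem_cat; [apply: fvt_tr_term | apply: fvts_tr_terms].
- by move=> r ts v /fvts_tr_terms.
- by move=> p IHp q IHq; apply: tr_fv_mem_cat.
- by move=> p IHp q IHq; apply: tr_fv_mem_cat.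
- by move=> s i p _ v h; apply: Or31.
- by move=> s i p _ v h; apply: Or31.
Qed.

Lemma fv_ex_xi Ns (body : formula L) v : v \in fv (ex_xi k Ns body) ->
  v \in fv body /\ (forall N, N \in Ns -> v != (RVs N, k)).
Proof.
elim: Ns => [|N Ns IH] //=; rewrite mem_filter => /andP [vN /IH [h1 h2]].
by split=> // N'; rewrite inE => /orP [/eqP -> | /h2].
Qed.

Lemma fv_xi_inv Ns v : v \in fv (xi_inv L y k Ns) -> tr_fv [::] Ns v.
Proof.
elim: Ns => [|N Ns IH] //=; rewrite !inE => /orP [/eqP -> | /orP [/eqP -> | /IH]].
- by apply: Or33; exists N; rewrite ?mem_head.
- exact: Or32.
by case=> [//|->|[N' h ->]]; [apply: Or32 | apply: Or33; exists N'; rewrite // inE h orbT].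
Qed.

Lemma fv_tr_esimple (p : formula L) v :
  v \in fv (tr_esimple y k p) -> v = (VFs, y) \/ v \in fv p.
Proof.
have fv_inv (q : formula L) (u : var) : u \in fv (tr_qf_inv y k q) -> u = (VFs, y) \/ u \in fv q.
  rewrite /tr_qf_inv => /fv_ex_xi [] /=; rewrite inE mem_cat.
  case/orP=> [/eqP -> _ | /orP [/fv_xi_inv | /fv_tr_qf]].
  - by left.
  - by case=> [//|->|[N h ->] /(_ N h)]; [left | rewrite eqxx].
  - by case=> [h|->|[N h ->] /(_ N h)]; [right | left | rewrite eqxx].
elim: p v => [||s a b|N a b|N a b c|N d a bs|r ts|q _|q _ r _|q _ r _|[|n] i q IH|s i q _] v;
  try exact: fv_inv.
by rewrite /= !mem_filter => /andP [vi /IH [->|h]]; [left | right; rewrite vi h].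
Qed.

Lemma qf_tr_qf (p : formula L) : qf p -> qf (tr_qf y k p).
Proof.
elim: p => //=; first by case.
- by move=> p IHp q IHq /andP [/IHp -> /IHq ->].
- by move=> p IHp q IHq /andP [/IHp -> /IHq ->].
Qed.

Lemma qf_xi_inv Ns : qf (xi_inv L y k Ns).
Proof. by elim: Ns. Qed.

Lemma esimple_ex_xi Ns (body : formula L) : qf body -> esimple (ex_xi k Ns body).
Proof. by elim: Ns => [|N Ns IH] /= h; [case: body h | apply: IH]. Qed.

Lemma esimple_tr_esimple (p : formula L) : esimple p -> esimple (tr_esimple y k p).
Proof.
have esimple_inv (q : formula L) : qf q -> esimple (tr_qf_inv y k q).
  by move=> hq; rewrite /tr_qf_inv; apply: esimple_ex_xi; rewrite /= qf_xi_inv qf_tr_qf.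
by elim: p => [||s a b|N a b|N a b c|N d a bs|r ts|q _|q _ r _|q _ r _|[|n] i q IH|s i q _];
  try exact: esimple_inv.
Qed.

End TranslationFreeVars.

Section TranslationCorrect.
Variables (L : lang) (M : structure L) (y k : nat).
Local Notation K := (hK (sF M)).

Lemma sat_ex_xiP Ns (body : formula L) (e : env M) : sat e (ex_xi k Ns body) ->
  exists2 e1 : env M, (forall s j, j != k -> e1 s j = e s j) & sat e1 body.
Proof.
elim: Ns e => [|N Ns IH] e /=; first by exists e.
case=> a /IH [e1 e1_e h]; exists e1 => // s j jk.
by rewrite e1_e // /upd xpair_eqE (negPf jk) andbF.
Qed.

Fixpoint set_xi (e : env M) (v : K) (Ns : seq nat) : env M :=
  match Ns with [::] => e | N :: Ns => set_xi (upd e (RVs N) k v) v Ns end.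

Lemma sat_set_xi Ns (body : formula L) e v :
  sat (set_xi e v Ns) body -> sat e (ex_xi k Ns body).
Proof. by elim: Ns e => [|N Ns IH] e //= h; exists v; apply: IH. Qed.

Lemma set_xi_off Ns e v s j : j != k -> set_xi e v Ns s j = e s j.
Proof.
move=> jk; elim: Ns e => [|N Ns IH] e //=.
by rewrite IH /upd xpair_eqE (negPf jk) andbF.
Qed.

Lemma set_xi_on Ns e v N : N \in Ns -> set_xi e v Ns (RVs N) k = v.
Proof.
have keep Ns' e' : e' (RVs N) k = v -> set_xi e' v Ns' (RVs N) k = v.
  by elim: Ns' e' => [|N' Ns' IH] e' //= h; apply: IH; rewrite /upd; case: ifP.
elim: Ns e => [|N' Ns IH] e //=; rewrite inE => /orP [/eqP <-|]; last exact: IH.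
by apply: keep; rewrite /upd eqxx.
Qed.

Lemma sat_xi_inv Ns (e : env M) : sat e (xi_inv L y k Ns) <->
  (forall N, N \in Ns -> rv_eq N (e (RVs N) k * e VFs y) 1).
Proof.
elim: Ns => [|N Ns IH] /=; first by split.
rewrite IH; split=> [[h1 h2] N'|h]; first by rewrite inE => /orP [/eqP -> //|/h2].
by split=> [|N' hN]; apply: h; rewrite inE ?eqxx ?hN ?orbT.
Qed.

Lemma sat_tr_qf_inv (p : formula L) (e e' : env M) :
  qf p -> (formula_bound p <= k)%N -> (y < k)%N ->
  e VFs y = (e' VFs y)^-1 ->
  (forall s j, j != k -> (s, j) != (VFs, y) -> e' s j = e s j) ->
  (sat e' (tr_qf_inv y k p) <-> e' VFs y != 0 /\ sat e p).
Proof.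
move=> qfp pk yk e_y e'_e; have yk' : y != k by rewrite neq_ltn yk.
have tr_qf_at (e1 : env M) : (forall s j, j != k -> e1 s j = e' s j) -> e' VFs y != 0 ->
    (forall N, N \in formula_rvs p -> rv_eq N (e1 (RVs N) k * e' VFs y) 1) ->
    (sat e1 (tr_qf y k p) <-> sat e p).
  move=> e1_e' w0 xi1; have e1_y : e1 VFs y = e' VFs y by apply: e1_e'.
  apply: (tr_qfP (Ns := formula_rvs p)); rewrite ?e1_y //.
  by move=> s j jk sj; rewrite e1_e' // e'_e.
split.
  case/sat_ex_xiP=> e1 e1_e' /= [/eqP w0 [/sat_xi_inv xi1 h]].
  have e1_y : e1 VFs y = e' VFs y by apply: e1_e'.
  rewrite e1_y in w0 xi1; split=> //.
  by apply/(tr_qf_at e1).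
case=> w0 hp; apply: (sat_set_xi (v := (e' VFs y)^-1)).
have xi1 N : N \in formula_rvs p ->
    rv_eq N (set_xi e' (e' VFs y)^-1 (formula_rvs p) (RVs N) k * e' VFs y) 1.
  by move=> hN; rewrite set_xi_on // mulVf //; apply: rv_eq_refl.
split; [|split].
- by rewrite /= set_xi_off //; apply/eqP.
- by apply/sat_xi_inv => N hN; rewrite [X in _ * X]set_xi_off //; apply: xi1.
- by apply/(tr_qf_at _ _ w0 xi1) => // s j; apply: set_xi_off.
Qed.

Lemma sat_tr_esimple (p : formula L) (e e' : env M) :
  esimple p -> (formula_bound p <= k)%N -> (y < k)%N ->
  e VFs y = (e' VFs y)^-1 ->
  (forall s j, j != k -> (s, j) != (VFs, y) -> e' s j = e s j) ->
  (sat e' (tr_esimple y k p) <-> e' VFs y != 0 /\ sat e p).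
Proof.
elim: p e e' => [||s a b|N a b|N a b c|N d a bs|r ts|q _|q _ r _|q _ r _|[|n] i q IH|s i q _];
  try exact: sat_tr_qf_inv.
move=> e e' /= hq; rewrite geq_max => /andP [ik qk] yk e_y e'_e.
have upd_e'_e a s j :
    j != k -> (s, j) != (VFs, y) -> upd e' (RVs n) i a s j = upd e (RVs n) i a s j.
  by move=> jk sj; rewrite /upd; case: ifP => // _; apply: e'_e.
have IHa a := IH (upd e (RVs n) i a) (upd e' (RVs n) i a) hq qk yk e_y (upd_e'_e a).
by split=> [[a /IHa [w0 h]] | [w0 [a h]]]; [split=> //; exists a | exists a; apply/IHa].
Qed.

Lemma sat_tr_esimple_upd (p : formula L) (e : env M) c :
  esimple p -> (formula_bound p <= k)%N -> (y < k)%N ->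
  (sat (upd e VFs y c) (tr_esimple y k p) <-> c != 0 /\ sat (upd e VFs y c^-1) p).
Proof.
move=> hp pk yk; rewrite (@sat_tr_esimple p (upd e VFs y c^-1)) // /upd ?eqxx //.
by move=> s j _ sj; rewrite (negPf sj).
Qed.

End TranslationCorrect.

Lemma inverse_graph_exists (K : fieldType) (A B P Q : K -> Prop) :
  (forall b, B b <-> exists c, A c /\ c * b = 1) ->
  (forall c, Q c <-> c != 0 /\ P c^-1) ->
  (exists c, A c /\ Q c) <-> (exists b, B b /\ P b).
Proof.
move=> BE QE; split=> [[c [Ac /QE [c0 Pc]]] | [b [/BE [c [Ac cb1]] Pb]]].
  by exists c^-1; split=> //; apply/BE; exists c; rewrite mulfV.
have c0 : c != 0 by apply: contra_eq_neq cb1 => ->; rewrite mul0r eq_sym oner_neq0.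
have bE : b = c^-1 by rewrite -[b](mulKf c0) cb1 mulr1.
by exists c; split=> //; apply/QE; rewrite -bE.
Qed.

Lemma inverse_graph_functional (K : fieldType) (A B : K -> Prop) :
  (forall b, B b <-> exists c, A c /\ c * b = 1) ->
  (forall c c', A c -> A c' -> c = c') -> forall b b', B b -> B b' -> b = b'.
Proof.
move=> BE A_fun b b' /BE [c [Ac cb1]] /BE [c' [Ac' cb1']].
have c0 : c != 0 by apply: contra_eq_neq cb1 => ->; rewrite mul0r eq_sym oner_neq0.
by rewrite (A_fun _ _ Ac' Ac) -cb1 in cb1'; apply: (mulfI c0).
Qed.

Section Inverse.
Variables (L : lang) (T : formula L -> Prop) (xs : seq var) (theta phi : formula L) (y : nat).
Variables (phi' : formula L) (y' : nat).
Hypothesis f_strong : estrongly_def T xs theta phi y.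
Hypothesis phi'_inv : forall M : structure L, models T M -> forall (e : env M) (b : hK (sF M)),
  sat (upd e VFs y' b) phi' <-> exists c, sat (upd e VFs y c) phi /\ c * b = 1.

Lemma inverse_domain : (VFs, y') \notin xs -> {subset fv phi' <= (VFs, y') :: xs} ->
  exists2 theta', esimple theta' & defines_fun T xs theta' phi' y'.
Proof.
case: f_strong => _ [_ _ _ phi_fun] f_comp y'_xs phi'_fv.
have [theta' [th'_es th'_fv th'_sem]] := f_comp (FNot (FEq (Var L VFs y) (VZero L))) y isT.
exists theta' => //; split=> // [v /th'_fv | M hM e]; first by rewrite /= eqxx cats0.
have f_inv_fun := inverse_graph_functional (phi'_inv hM e) (proj2 (phi_fun M hM e)).
split=> //; rewrite th'_sem //.
have := @inverse_graph_exists _ _ _ (fun _ => True) _ (phi'_inv hM e).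
rewrite /= /upd eqxx => ->; first by split=> [[b []]|[b]]; exists b.
by move=> c; split=> [/eqP|[/eqP]].
Qed.

Lemma inverse_compose (psi : formula L) (y'' : nat) : esimple psi ->
  exists chi : formula L,
    [/\ esimple chi,
        {subset fv chi <= xs ++ [seq v <- fv psi | v != (VFs, y'')]} &
        forall M : structure L, models T M -> forall e : env M,
          sat e chi <-> exists b, sat (upd e VFs y' b) phi' /\ sat (upd e VFs y'' b) psi].
Proof.
move=> psi_es; pose k := maxn (formula_bound psi) y''.+1.
case: f_strong => _ _ /(_ (tr_esimple y'' k psi) y'' (esimple_tr_esimple _ _ psi_es)).
case=> chi [chi_es chi_fv chi_sem]; exists chi; split=> // [v /chi_fv | M hM e].
  rewrite !mem_cat => /orP [-> // | ]; rewrite !mem_filter => /andP [vy /fv_tr_esimple].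
  by case=> [vy'' | ->]; [rewrite vy'' eqxx in vy | rewrite vy orbT].
rewrite chi_sem //; apply: inverse_graph_exists (phi'_inv hM e) _ => c.
exact: sat_tr_esimple_upd psi_es (leq_maxl _ _) (leq_maxr _ _).
Qed.

End Inverse.

Theorem lemma4p9 (L : lang) (T : formula L -> Prop) (xs : seq var)
    (theta phi : formula L) (y : nat) :
  estrongly_def T xs theta phi y ->
  forall (phi' : formula L) (y' : nat),
    (VFs, y') \notin xs ->
    {subset fv phi' <= (VFs, y') :: xs} ->
    (forall M : structure L, models T M -> forall (e : env M) (b : hK (sF M)),
       sat (upd e VFs y' b) phi' <->
       exists c, sat (upd e VFs y c) phi /\ c * b = 1) ->
    exists theta' : formula L, estrongly_def T xs theta' phi' y'.
Proof.
move=> f_strong phi' y' y'_xs phi'_fv phi'_inv.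
have [theta' th'_es th'_def] := inverse_domain f_strong phi'_inv y'_xs phi'_fv.
by exists theta'; split=> //; apply: inverse_compose f_strong phi'_inv.
Qed.
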